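(* Assume the setting and Hypotheses (H1)--(H5) of the context. Define, for $V\in\mathcal{D}$ and $0\le\mu\le\mu_0$, \[ \hat F(V,\mu):=L_0V-\chi_1^*[V]\chi_0+\mu\left(L_1(\mu)V-\chi_0^*[L_1(\mu)V]\chi_0\right)+Q(V,\mu)-\chi_0^*[Q(V,\mu)]\chi_0 . \] Then $DJ_\mu(V)\hat F(V,\mu)=0$ for all $V\in\hat{\mathcal{D}}:=\{V\in\mathcal{D}:\chi_0^*[V]=0\}$.
   Context: Setting. $\mathcal{D}\subseteq\mathcal{X}$ are real Banach spaces with $\mathcal{D}$ continuously embedded in $\mathcal{X}$; spectral notions refer to the complexifications, with $L_0\in\mathcal{B}(\mathcal{D},\mathcal{X})$ regarded as an operator in $\mathcal{X}$ with domain $\mathcal{D}$; $\mu_0>0$. (H1) $F(U,\mu)=L_0U+\mu L_1(\mu)U+Q(U,\mu)$ with $L_0\in\mathcal{B}(\mathcal{D},\mathcal{X})$, and $L_1:[0,\mu_0]\to\mathcal{B}(\mathcal{D},\mathcal{X})$, $Q:\mathcal{X}\times[0,\mu_0]\to\mathcal{X}$ analytic, $Q(0,\mu)=0$, $D_UQ(0,\mu)=0$. (H2) $\mathcal{S}\in\mathcal{B}(\mathcal{X})$, $\mathcal{S}^2=I$, $\|\mathcal{S}\|=1$, $\mathcal{S}L_0=-L_0\mathcal{S}$, $\mathcal{S}L_1(\mu)=-L_1(\mu)\mathcal{S}$, $Q(\mathcal{S}U,\mu)=-\mathcal{S}Q(U,\mu)$ for $U\in\mathcal{D}$. (H3) For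 some $\omega>0$, $\sigma(L_0)\cap i\mathbb{R}=\{0,\pm i\omega\}$, all geometrically simple eigenvalues, $0$ of algebraic multiplicity $4$, $\pm i\omega$ of algebraic multiplicity $1$, and $|\mathrm{Re}\lambda|\ge\lambda_0>0$ for $\lambda\in\sigma(L_0)\setminus i\mathbb{R}$. (H4) The spectral projection of $L_0$ for the eigenvalue $0$ is $\Pi_0U=\sum_{k=0}^3\chi_k^*[U]\chi_k$ with $\chi_k\in\mathcal{D}$, $L_0\chi_0=0$, $L_0\chi_{k+1}=\chi_k$ ($k=0,1,2$), $\chi_k^*\in\mathcal{X}^*$; and (i) $L_1(\mu)\chi_0=0$, (ii) $Q(U+\gamma\chi_0,\mu)=Q(U,\mu)$ for $U\in\mathcal{D}$, $\gamma\in\mathbb{R}$, (iii) $\mathcal{S}\chi_k=(-1)^{k+1}\chi_k$. (H5) For each $\mu$, $J_\mu:\mathcal{X}\to\mathbb{R}$ with: $(U,\mu)\mapsto J_\mu(U)$ analytic; $DJ_\mu(U)F(U,\mu)=0$ for $U\in\mathcal{D}$; $J_\mu(\mathcal{S}U)=J_\mu(U)$; $J_0(0)=0$ and there is analytic $\mu\mapsto\mathscr{J}_*(\mu)\in\mathcal{X}^*$ with $J_\mu(U)-J_0(U)=\mu\mathscr{J}_*(\mu)U$ for $U\in\mathcal{D}$; $J_\mu(U+\gamma\chi_0)=J_\mu(U)$ for $U\in\mathcal{D}$, $\gamma\in\mathbb{R}$; $\chi_3^*[U]=DJ_0(0)U$. *)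

From HB Require Import structures.
From mathcomp Require Import all_boot all_order all_algebra.
From mathcomp Require Import all_classical all_reals all_analysis.
Set Implicit Arguments. Unset Strict Implicit. Unset Printing Implicit Defensive.
Import Order.TTheory GRing.Theory Num.Theory.
Import numFieldNormedType.Exports.
Local Open Scope ring_scope.
Local Open Scope classical_set_scope.

Section Generic.
Variable R : realType.

Definition bounded_linear (V W : normedModType R) (f : V -> W) : Prop :=
  (forall (a : R) (u v : V), f (a *: u + v) = a *: f u + f v) /\
  exists C : R, forall u, `|f u| <= C * `|u|.

Definition opnorm_eq1 (V : normedModType R) (S : V -> V) : Prop :=
  (forall x, `|S x| <= `|x|) /\
  (forall C : R, (forall x, `|S x| <= C * `|x|) -> 1 <= C).

Definition multilinear (V W : normedModType R) (n : nat)
  (A : ('I_n -> V) -> W) : Prop :=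
  forall (i : 'I_n) (h : 'I_n -> V) (a : R) (u v : V),
    A (fun j => if j == i then a *: u + v else h j) =
    a *: A (fun j => if j == i then u else h j) +
    A (fun j => if j == i then v else h j).

Definition analytic_at (V W : normedModType R) (f : V -> W) (x : V) : Prop :=
  exists (A : forall n : nat, ('I_n -> V) -> W) (C : nat -> R) (r : R),
    0 < r /\
    (forall n, multilinear (A n)) /\
    (forall n, 0 <= C n) /\
    (forall n (h : 'I_n -> V), `|A n h| <= C n * \prod_(i < n) `|h i|) /\
    cvgn (series (fun n => C n * r ^+ n)) /\
    (forall y : V, `|y - x| < r ->
       series (fun n => A n (fun _ => y - x)) @ \oo --> f y).

(* analytic on a set (f defined on the whole space; analyticity required at
   each point of A, i.e. f extends analytically to a neighbourhood of A) *)
Definition analytic_on (V W : normedModType R) (f : V -> W) (A : set V) :=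
  forall x, A x -> analytic_at f x.

Definition op_analytic_at (V W : normedModType R) (T : R -> V -> W) (m : R) :=
  exists (B : nat -> V -> W) (c : nat -> R) (r : R),
    0 < r /\
    (forall n, (forall (a : R) (u v : V), B n (a *: u + v) = a *: B n u + B n v)
               /\ 0 <= c n /\ forall u, `|B n u| <= c n * `|u|) /\
    cvgn (series (fun n => c n * r ^+ n)) /\
    (forall t : R, `|t| < r -> forall eps : R, 0 < eps ->
       \forall N \near \oo, forall u : V,
         `|T (m + t) u - \sum_(0 <= n < N) (t ^+ n) *: B n u| <= eps * `|u|).

Definition op_analytic_on (V W : normedModType R) (T : R -> V -> W) (A : set R) :=
  forall m, A m -> op_analytic_at T m.

(* X_C is modelled as X * X (p = p.1 + i p.2), complex numbers as R * R. *)
Definition cscale (V : lmodType R) (c : R * R) (p : V * V) : V * V :=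
  (c.1 *: p.1 - c.2 *: p.2, c.2 *: p.1 + c.1 *: p.2).

Definition cnorm (V : normedModType R) (p : V * V) : R := `|p.1| + `|p.2|.

Section Spectral.
Variables (D X : normedModType R) (iota : D -> X) (L : D -> X).

Definition iotaC (p : D * D) : X * X := (iota p.1, iota p.2).

(* (L - lambda) on the complexification, lambda = a + i b *)
Definition shiftC (a b : R) (p : D * D) : X * X :=
  (L p.1 - a *: iota p.1 + b *: iota p.2, L p.2 - b *: iota p.1 - a *: iota p.2).

Definition in_resolvent (a b : R) : Prop :=
  exists g : X * X -> D * D,
    cancel (shiftC a b) g /\ cancel g (shiftC a b) /\
    exists C : R, forall q, cnorm (iotaC (g q)) <= C * cnorm q.

Definition in_spectrum (a b : R) : Prop := ~ in_resolvent a b.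

Definition is_eigenvalue (a b : R) : Prop :=
  exists p : D * D, p <> (0, 0) /\ shiftC a b p = (0, 0).

Definition geom_simple (a b : R) : Prop :=
  exists w : D * D, w <> (0, 0) /\ shiftC a b w = (0, 0) /\
    forall p, shiftC a b p = (0, 0) -> exists c, p = cscale c w.

(* p lies in ker (L - lambda)^k (all intermediate iterates in D_C) *)
Fixpoint gen_ker (a b : R) (k : nat) (p : D * D) : Prop :=
  match k with
  | 0%N => p = (0, 0)
  | k'.+1 => exists q : D * D, iotaC q = shiftC a b p /\ gen_ker a b k' q
  end.

Definition gen_eig (a b : R) (p : D * D) : Prop := exists k, gen_ker a b k p.

(* the spectral (Riesz) projection for lambda = a + i b: the bounded
   complex-linear projection onto the generalised eigenspace, commuting with
   L, along an L-invariant complement on which L - lambda is boundedly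
   invertible *)
Definition spectral_proj (a b : R) (P : X * X -> X * X) : Prop :=
  (forall c p q, P (cscale c p + q) = cscale c (P p) + P q) /\
  (exists C : R, forall p, cnorm (P p) <= C * cnorm p) /\
  (forall p, P (P p) = P p) /\
  (forall q, (exists p, P p = q) <-> (exists d, iotaC d = q /\ gen_eig a b d)) /\
  (forall d : D * D, exists d' : D * D,
      iotaC d' = P (iotaC d) /\ shiftC a b d' = P (shiftC a b d)) /\
  (forall q, P q = (0, 0) ->
      exists d : D * D, P (iotaC d) = (0, 0) /\ shiftC a b d = q) /\
  (exists C : R, forall d : D * D, P (iotaC d) = (0, 0) ->
      cnorm (iotaC d) <= C * cnorm (shiftC a b d)).

Definition gen_eig_dim (a b : R) (m : nat) : Prop :=
  exists w : 'I_m -> D * D,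
    (forall i, gen_eig a b (w i)) /\
    (forall d, gen_eig a b d ->
       exists c : 'I_m -> R * R, d = \sum_(i < m) cscale (c i) (w i)) /\
    (forall c : 'I_m -> R * R,
       \sum_(i < m) cscale (c i) (w i) = 0 -> forall i, c i = (0, 0)).

Definition alg_mult (a b : R) (m : nat) : Prop :=
  (exists P, spectral_proj a b P) /\ gen_eig_dim a b m.

End Spectral.

Definition Fhat (D X : normedModType R) (iota : D -> X) (L0 : D -> X)
  (L1 : R -> D -> X) (Q : X -> R -> X) (chi0 : D)
  (chi0s chi1s : X -> R) (V : D) (mu : R) : X :=
  L0 V - chi1s (iota V) *: iota chi0
  + mu *: (L1 mu V - chi0s (L1 mu V) *: iota chi0)
  + Q (iota V) mu - chi0s (Q (iota V) mu) *: iota chi0.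

End Generic.

(* Each correction term of \hat F is a scalar multiple of chi0, so
   \hat F(V, mu) = F(V, mu) - c chi0 for some real c.  Since J_mu is constant
   along the lines V + t chi0, DJ_mu(V) chi0 = 0, and DJ_mu(V) F(V, mu) = 0 is
   the conservation law; linearity of DJ_mu(V) concludes.  Both derivative
   facts need J_mu to be Frechet differentiable ('d is junk otherwise), which
   comes from analyticity: the power series of J_mu at V has a bounded linear
   term and a remainder bounded by a multiple of |h|^2, controlled by the
   majorant series sum C_n r^n. *)

From HB Require Import structures.
From mathcomp Require Import all_boot all_order all_algebra.
From mathcomp Require Import all_classical all_reals all_analysis.
From mathcomp Require Import ring.
Import Order.TTheory GRing.Theory Num.Theory.
Import numFieldNormedType.Exports.
Local Open Scope ring_scope.
Local Open Scope classical_set_scope.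

Section Majorant.
Context {R : realType}.

Lemma sum_le_lim_series (u : R ^nat) (m N : nat) :
  (forall n, 0 <= u n) -> cvgn (series u) ->
  \sum_(m <= k < N) u k <= limn (series u).
Proof.
move=> u_ge0 u_cvg; apply: le_trans (nondecreasing_cvgn_le _ u_cvg N).
  have [mN|Nm] := leqP m N; last by rewrite big_geq ?sumr_ge0 // ltnW.
  by rewrite /series /= (big_cat_nat (leq0n m) mN) /= lerDr sumr_ge0.
exact: nondecreasing_series.
Qed.

Lemma majorant_tail_le (C : R ^nat) (r s : R) (N : nat) :
  0 < r -> 0 <= s <= r -> (forall n, 0 <= C n) ->
  cvgn (series (fun n => C n * r ^+ n)) ->
  \sum_(2 <= n < N) C n * s ^+ n
    <= s ^+ 2 / r ^+ 2 * limn (series (fun n => C n * r ^+ n)).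
Proof.
move=> r_gt0 /andP[s_ge0 s_le_r] C_ge0 C_cvg.
have Cr_ge0 n : 0 <= C n * r ^+ n by rewrite mulr_ge0 ?exprn_ge0 // ltW.
apply: le_trans (ler_wpM2l _ (sum_le_lim_series _ 2 N Cr_ge0 C_cvg)); last first.
  by rewrite divr_ge0 ?exprn_ge0 // ltW.
rewrite mulr_sumr big_nat [leRHS]big_nat; apply: ler_sum => -[|[|n]] // _.
have -> : s ^+ 2 / r ^+ 2 * (C n.+2 * r ^+ n.+2) = C n.+2 * (s ^+ 2 * r ^+ n).
  by rewrite !exprS; field; rewrite gt_eqF.
rewrite ler_wpM2l // -addn2 exprD mulrC ler_wpM2l ?exprn_ge0 //.
by rewrite lerXn2r // nnegrE (le_trans s_ge0).
Qed.

End Majorant.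

Section Differentiability.
Context {R : realType} {V W : normedModType R}.

Lemma diff_eq0_along (f : V -> W) (x v : V) :
  differentiable f x -> (forall t : R, f (x + t *: v) = f x) -> 'd f x v = 0.
Proof.
move=> df f_cst; rewrite -deriveE //; apply/lim_near_cst => //=.
by near=> t; rewrite [_ + x]addrC f_cst subrr scaler0.
Unshelve. all: by end_near.
Qed.

Lemma quadratic_remainder_differentiable (f : V -> W) (x : V)
    (l : {linear V -> W}) (K M r : R) :
  0 < r -> (forall h, `|l h| <= K * `|h|) ->
  (forall h, `|h| < r -> `|f (x + h) - f x - l h| <= M * `|h| ^+ 2) ->
  differentiable f x.
Proof.
move=> r_gt0 l_bnd f_quad.
have l_cont : continuous l.
  apply/linear_bounded_continuous/bounded_funP => s.
  exists (`|K| * s) => h hs /=.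
  by rewrite (le_trans (l_bnd h)) // (le_trans (ler_norm _)) // normrM normr_id ler_wpM2l.
have f_taylor : f \o shift x = cst (f x) + (l : V -> W) +o_ 0 id.
  apply/eqaddoP => e e_gt0.
  have M1_gt0 : 0 < `|M| + 1 by rewrite ltr_wpDl.
  near=> h.
  have /andP[hr he] : (`|h| < r) && (`|h| < e / (`|M| + 1)).
    by rewrite -lt_min; near: h; apply: nbhs0_lt; rewrite lt_min r_gt0 divr_gt0.
  rewrite !fctE /= [h + x]addrC opprD addrA; apply: (le_trans (f_quad h hr)).
  rewrite expr2 mulrA ler_wpM2r //.
  rewrite (le_trans (_ : _ <= (`|M| + 1) * `|h|)) //.
    by rewrite ler_wpM2r // (le_trans (ler_norm _)) // lerDl.
  by rewrite mulrC -ler_pdivlMr // ltW.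
by apply/diff_locallyP; rewrite (diff_unique l_cont f_taylor).
Unshelve. all: by end_near.
Qed.

Lemma multilinear1_diag_linear (A : ('I_1 -> V) -> W) :
  multilinear A -> linear (fun h => A (fun _ => h)).
Proof.
move=> A_ml a u v; have := A_ml ord0 (fun _ => 0) a u v.
have diag w : (fun j : 'I_1 => if j == ord0 then w else 0) = (fun _ => w).
  by apply/funext => j; rewrite (ord1 j) eqxx.
by rewrite !diag.
Qed.

Lemma analytic_at_quadratic_remainder (f : V -> W) (x : V) :
  analytic_at f x ->
  exists (l : {linear V -> W}) (K M r : R),
    [/\ 0 < r, forall h, `|l h| <= K * `|h|
      & forall h, `|h| < r -> `|f (x + h) - f x - l h| <= M * `|h| ^+ 2].
Proof.
move=> [A [C [r [r_gt0 [A_ml [C_ge0 [A_bnd [C_cvg f_sum]]]]]]]].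
pose a n h := A n (fun _ : 'I_n => h).
have a_bnd n h : `|a n h| <= C n * `|h| ^+ n.
  apply: le_trans (A_bnd n _) _.
  by rewrite (eq_bigr (fun _ => `|h|)) // prodr_const card_ord.
pose l : {linear V -> W} :=
  HB.pack (a 1%N) (GRing.isLinear.Build _ _ _ _ _ (multilinear1_diag_linear _ (A_ml 1%N))).
have l_bnd h : `|l h| <= C 1%N * `|h| by rewrite -[`|h|]expr1 a_bnd.
pose c := a 0%N 0.
have a0 h : a 0%N h = c by rewrite /a /c; congr (A 0%N _); apply/funext => -[].
pose M := limn (series (fun n => C n * r ^+ n)) / r ^+ 2.
have partial_bnd h N : `|h| <= r -> (2 <= N)%N ->
    `|series (fun n => a n h) N - c - l h| <= M * `|h| ^+ 2.
  move=> h_le_r N_ge2.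
  rewrite /series /= big_ltn ?(leq_trans _ N_ge2) // big_ltn // a0.
  rewrite [c + _]addrC addrK [a 1%N h + _]addrC addrK.
  apply: le_trans (ler_norm_sum _ _ _) _.
  apply: le_trans (ler_sum _ (fun n _ => a_bnd n h)) _.
  rewrite /M mulrC [_ / _]mulrC mulrA; apply: majorant_tail_le => //.
  by rewrite normr_ge0 h_le_r.
have rem_bnd h : `|h| < r -> `|f (x + h) - c - l h| <= M * `|h| ^+ 2.
  move=> h_lt_r; have := f_sum (x + h); rewrite addrC addKr => /(_ h_lt_r) f_lim.
  have norm_lim : `|series (fun n => a n h) n - c - l h| @[n --> \oo]
                    --> `|f (x + h) - c - l h|.
    by apply: cvg_norm; apply: cvgB; [apply: cvgB => //; apply: cvg_cst | apply: cvg_cst].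
  rewrite -(cvg_lim _ norm_lim) //; apply: limr_le; first exact: cvgP norm_lim.
  by near=> N; apply: partial_bnd; [exact: ltW | near: N; exists 2%N].
have fx : f x = c.
  have := rem_bnd 0; rewrite normr0 expr0n mulr0 addr0 linear0 subr0 normr_le0 subr_eq0.
  by move=> /(_ r_gt0) /eqP.
by exists l, (C 1%N), M, r; split=> // h; rewrite fx; apply: rem_bnd.
Unshelve. all: by end_near.
Qed.

Lemma analytic_at_differentiable (f : V -> W) (x : V) :
  analytic_at f x -> differentiable f x.
Proof.
move=> /analytic_at_quadratic_remainder [l [K [M [r [r_gt0 l_bnd f_quad]]]]].
exact: quadratic_remainder_differentiable r_gt0 l_bnd f_quad.
Qed.

End Differentiability.

Lemma differentiable_partial1 {R : realType} {U V W : normedModType R}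
    (f : V -> U -> W) (x : U) (y : V) :
  differentiable (fun p : U * V => f p.2 p.1) (x, y) -> differentiable (f y) x.
Proof.
move=> df; change (differentiable ((fun p : U * V => f p.2 p.1) \o (fun u => (u, y))) x).
exact: differentiable_comp.
Qed.

Lemma Fhat_eq (R : realType) (D X : normedModType R) (iota : D -> X)
    (L0 : D -> X) (L1 : R -> D -> X) (Q : X -> R -> X) (chi0 : D)
    (chi0s chi1s : X -> R) (V : D) (mu : R) :
  Fhat iota L0 L1 Q chi0 chi0s chi1s V mu =
  L0 V + mu *: L1 mu V + Q (iota V) mu
  - (chi1s (iota V) + mu * chi0s (L1 mu V) + chi0s (Q (iota V) mu)) *: iota chi0.
Proof.
rewrite /Fhat scalerBr scalerA !scalerDl !opprD !addrA.
by rewrite (addrAC (L0 V)) (addrAC _ _ (Q _ _)) (addrAC _ _ (Q _ _)).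
Qed.

Theorem lemma2p5
  (R : realType) (D X : completeNormedModType R)
  (iota : D -> X) (iota_bl : bounded_linear iota) (iota_inj : injective iota)
  (mu0 : R) (mu0_gt0 : 0 < mu0)
  (* (H1) *)
  (L0 : D -> X) (L1 : R -> D -> X) (Q : X -> R -> X)
  (L0_bl : bounded_linear L0)
  (L1_bl : forall mu, 0 <= mu <= mu0 -> bounded_linear (L1 mu))
  (L1_an : op_analytic_on L1 [set mu | 0 <= mu <= mu0])
  (Q_an : analytic_on (fun p : X * R => Q p.1 p.2) [set p | 0 <= p.2 <= mu0])
  (Q0 : forall mu, 0 <= mu <= mu0 -> Q 0 mu = 0)
  (DQ0 : forall mu, 0 <= mu <= mu0 -> forall h : X, 'd (fun U => Q U mu) 0 h = 0)
  (* (H2) *)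
  (S : X -> X) (SD : D -> D)
  (S_bl : bounded_linear S) (S_inv : forall x, S (S x) = x) (S_norm : opnorm_eq1 S)
  (SD_def : forall U : D, iota (SD U) = S (iota U))
  (S_L0 : forall U : D, L0 (SD U) = - S (L0 U))
  (S_L1 : forall mu, 0 <= mu <= mu0 -> forall U : D, L1 mu (SD U) = - S (L1 mu U))
  (S_Q : forall mu, 0 <= mu <= mu0 -> forall U : D,
           Q (S (iota U)) mu = - S (Q (iota U) mu))
  (* (H3) *)
  (omega : R) (omega_gt0 : 0 < omega)
  (spec_iR : forall b : R, in_spectrum iota L0 0 b <-> (b = 0 \/ b = omega \/ b = - omega))
  (eig0 : is_eigenvalue iota L0 0 0) (eigp : is_eigenvalue iota L0 0 omega)
  (eigm : is_eigenvalue iota L0 0 (- omega))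
  (gs0 : geom_simple iota L0 0 0) (gsp : geom_simple iota L0 0 omega)
  (gsm : geom_simple iota L0 0 (- omega))
  (am0 : alg_mult iota L0 0 0 4) (amp : alg_mult iota L0 0 omega 1)
  (amm : alg_mult iota L0 0 (- omega) 1)
  (gap : exists lambda0 : R, 0 < lambda0 /\
     forall a b : R, in_spectrum iota L0 a b -> a <> 0 -> lambda0 <= `|a|)
  (* (H4) *)
  (chi0 chi1 chi2 chi3 : D) (chi0s chi1s chi2s chi3s : X -> R)
  (chi0s_bl : bounded_linear chi0s) (chi1s_bl : bounded_linear chi1s)
  (chi2s_bl : bounded_linear chi2s) (chi3s_bl : bounded_linear chi3s)
  (Pi0_spec : spectral_proj iota L0 0 0
     (fun p : X * X =>
        let Pi0 := fun U : X => chi0s U *: iota chi0 + chi1s U *: iota chi1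
                              + chi2s U *: iota chi2 + chi3s U *: iota chi3 in
        (Pi0 p.1, Pi0 p.2)))
  (L0_chi0 : L0 chi0 = 0) (L0_chi1 : L0 chi1 = iota chi0)
  (L0_chi2 : L0 chi2 = iota chi1) (L0_chi3 : L0 chi3 = iota chi2)
  (L1_chi0 : forall mu, 0 <= mu <= mu0 -> L1 mu chi0 = 0)
  (Q_chi0 : forall mu, 0 <= mu <= mu0 -> forall (U : D) (gamma : R),
      Q (iota U + gamma *: iota chi0) mu = Q (iota U) mu)
  (S_chi0 : S (iota chi0) = - iota chi0) (S_chi1 : S (iota chi1) = iota chi1)
  (S_chi2 : S (iota chi2) = - iota chi2) (S_chi3 : S (iota chi3) = iota chi3)
  (* (H5) *)
  (J : R -> X -> R) (Jstar : R -> X -> R)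
  (J_an : analytic_on (fun p : X * R => J p.2 p.1) [set p | 0 <= p.2 <= mu0])
  (J_cons : forall mu, 0 <= mu <= mu0 -> forall U : D,
      'd (J mu) (iota U) (L0 U + mu *: L1 mu U + Q (iota U) mu) = 0)
  (J_S : forall mu, 0 <= mu <= mu0 -> forall U : X, J mu (S U) = J mu U)
  (J00 : J 0 0 = 0)
  (Jstar_bl : forall mu, 0 <= mu <= mu0 -> bounded_linear (Jstar mu))
  (Jstar_an : op_analytic_on Jstar [set mu | 0 <= mu <= mu0])
  (J_Jstar : forall mu, 0 <= mu <= mu0 -> forall U : D,
      J mu (iota U) - J 0 (iota U) = mu * Jstar mu (iota U))
  (J_chi0 : forall mu, 0 <= mu <= mu0 -> forall (U : D) (gamma : R),
      J mu (iota U + gamma *: iota chi0) = J mu (iota U))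
  (chi3s_DJ : forall U : X, chi3s U = 'd (J 0) 0 U) :
  forall mu : R, 0 <= mu <= mu0 -> forall V : D, chi0s (iota V) = 0 ->
    'd (J mu) (iota V) (Fhat iota L0 L1 Q chi0 chi0s chi1s V mu) = 0.
Proof.
move=> mu mu_range V _.
have dJ : differentiable (J mu) (iota V).
  by apply/differentiable_partial1/analytic_at_differentiable/J_an.
have dJ_chi0 : 'd (J mu) (iota V) (iota chi0) = 0.
  by apply: diff_eq0_along => // t; apply: J_chi0.
by rewrite Fhat_eq linearB linearZ /= dJ_chi0 scaler0 subr0 J_cons.
Qed.
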